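(* Let $0<\epsilon<1/3$. Suppose $H=(X^1\cup X^2\cup X^3,E)$ is a $3$-partite $3$-graph, $D_1,D_2,D_3\subseteq V(H)$, and $(D_1,D_2,D_3)$ is an $\epsilon$-regular triple in $H$. Then one of the following holds: (1) $d_H(D_1,D_2,D_3)\leq\epsilon$; or (2) there are pairwise distinct $f(1),f(2),f(3)\in\{1,2,3\}$ such that $|D_i\cap X^{f(i)}|\geq(1-2\epsilon)|D_i|$ for each $i\in\{1,2,3\}$.
   Context: A $3$-graph $H=(V,E)$ is $3$-partite with partition $V=X^1\cup X^2\cup X^3$ if every edge meets each $X^i$ in at most one vertex. For nonempty $X,Y,Z\subseteq V$, $d_H(X,Y,Z)=|\{(x,y,z)\in X\times Y\times Z:\{x,y,z\}\in E\}|/(|X||Y||Z|)$. A triple $(X,Y,Z)$ is $\epsilon$-regular in $H$ if for all $X'\subseteq X,Y'\subseteq Y,Z'\subseteq Z$ with $|X'|\ge\epsilon|X|,|Y'|\ge\epsilon|Y|,|Z'|\ge\epsilon|Z|$, $|d_H(X,Y,Z)-d_H(X',Y',Z')|\le\epsilon$. *)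

From HB Require Import structures.
From mathcomp Require Import all_boot all_order all_algebra.
Set Implicit Arguments. Unset Strict Implicit. Unset Printing Implicit Defensive.
Import Order.TTheory GRing.Theory Num.Theory.
Local Open Scope ring_scope.

Definition is_3graph (V : finType) (E : {set {set V}}) : Prop :=
  forall e, e \in E -> #|e| = 3%N.

Definition is_3partite (V : finType) (E : {set {set V}}) (X : 'I_3 -> {set V}) : Prop :=
  [/\ (forall v : V, exists i, v \in X i),
      (forall i j, i != j -> [disjoint X i & X j]) &
      (forall e, e \in E -> forall i, (#|e :&: X i| <= 1)%N)].

Definition density (R : realFieldType) (V : finType) (E : {set {set V}})
  (X Y Z : {set V}) : R :=
  (#|[set t in setX (setX X Y) Z | [set t.1.1; t.1.2; t.2] \in E]|)%:R
  / (#|X| * #|Y| * #|Z|)%:R.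

Definition eps_regular (R : realFieldType) (V : finType) (E : {set {set V}})
  (eps : R) (X Y Z : {set V}) : Prop :=
  forall X' Y' Z' : {set V},
    X' \subset X -> Y' \subset Y -> Z' \subset Z ->
    eps * (#|X|)%:R <= (#|X'|)%:R ->
    eps * (#|Y|)%:R <= (#|Y'|)%:R ->
    eps * (#|Z|)%:R <= (#|Z'|)%:R ->
    `|@density R V E X Y Z - @density R V E X' Y' Z'| <= eps.

From HB Require Import structures.
From mathcomp Require Import all_boot all_order all_algebra.
From mathcomp Require Import lra.
Import Order.TTheory GRing.Theory Num.Theory.
Local Open Scope ring_scope.
Set Implicit Arguments. Unset Strict Implicit.

(* If the density of (D 0, D 1, D 2) exceeds eps, call the class X j heavy
   for D i when |D i ∩ X j| >= eps |D i|.  Two different D i, D k cannot be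
   heavy in the same class: the parts of D i and D k in X j, together with the
   remaining D l, span no edge (an edge meets X j at most once), so
   regularity would force the density below eps.  Since eps < 1/3 every D i
   has a heavy class, so the heavy classes define an injection f.  Each
   class other than f i is heavy for some other D k, hence light for D i,
   and the two light classes cover less than 2 eps |D i| of D i. *)

Lemma card_set3_uniq (T : finType) (x y z : T) :
  #|[set x; y; z]| = 3%N -> uniq [:: x; y; z].
Proof.
move=> card3; apply/card_uniqP; rewrite [size _]/= -card3.
by apply: eq_card => v; rewrite !inE orbA.
Qed.

Lemma card_sum_partition (T I : finType) (X : I -> {set T}) (D : {set T}) :
  (forall v, exists i, v \in X i) ->
  (forall i j, i != j -> [disjoint X i & X j]) ->
  #|D| = (\sum_i #|D :&: X i|)%N.
Proof.
move=> cover disj.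
have -> : (\sum_i #|D :&: X i| = \sum_i \sum_(v in D | v \in X i) 1)%N.
  by apply: eq_bigr => i _; rewrite -sum1_card; apply: eq_bigl => v; rewrite inE.
rewrite (exchange_big_dep (mem D)) => [|_ v _ /andP[] //].
rewrite -sum1_card; apply: eq_bigr => v vD.
have [i vXi] := cover v.
rewrite sum1_card (@eq_card1 _ i) // => k; rewrite -topredE /= vD inE.
have [-> // | ki] := eqVneq k i.
by rewrite (disjointFl (disj _ _ ki) vXi).
Qed.

Lemma density_eq0 (R : realFieldType) (V : finType) (E : {set {set V}})
    (A B C : {set V}) :
  (forall x y z, x \in A -> y \in B -> z \in C -> [set x; y; z] \notin E) ->
  @density R V E A B C = 0.
Proof.
move=> no_edge; rewrite /density.
have -> : [set t in setX (setX A B) C | [set t.1.1; t.1.2; t.2] \in E] = set0.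
  apply/setP => [[[x y] z]]; rewrite !inE /=.
  by apply/negP => /andP[/andP[/andP[xA yB] zC]]; apply/negP; apply: no_edge.
by rewrite cards0 mul0r.
Qed.

Section ThreePartite.

Variables (V : finType) (E : {set {set V}}) (X : 'I_3 -> {set V}).
Hypotheses (E3 : is_3graph E) (EX : is_3partite E X).

Lemma edge_class_tnth_inj x y z j (i k : 'I_3) :
  [set x; y; z] \in E ->
  tnth [tuple x; y; z] i \in X j -> tnth [tuple x; y; z] k \in X j -> i = k.
Proof.
set t := [tuple x; y; z] => e_in ti tk.
have /tuple_uniqP t_inj : uniq t by apply: card_set3_uniq; apply: E3.
have [_ _ /(_ _ e_in j) /card_le1_eqP meet1] := EX.
have in_e l : tnth t l \in [set x; y; z].
  by have := mem_tnth l t; rewrite !inE orbA.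
by apply: t_inj; apply: meet1; rewrite inE ?in_e.
Qed.

Section DenseRegularTriple.

Variables (R : realFieldType) (D : 'I_3 -> {set V}) (eps : R).
Hypotheses (eps_gt0 : 0 < eps) (eps_lt : eps < 3^-1).
Hypothesis D_neq0 : forall i, D i != set0.
Hypothesis D_regular : @eps_regular R V E eps (D 0) (D 1) (D 2).
Hypothesis D_dense : eps < @density R V E (D 0) (D 1) (D 2).

Definition heavy i j := eps * (#|D i|)%:R <= (#|D i :&: X j|)%:R.

Lemma heavy_inj j i k : heavy i j -> heavy k j -> i = k.
Proof.
move=> hij hkj; apply/eqP/negPn/negP => ik.
pose A l := if (l == i) || (l == k) then D l :&: X j else D l.
have A_sub l : A l \subset D l by rewrite /A; case: ifP => // _; apply: subsetIl.
have A_big l : eps * (#|D l|)%:R <= (#|A l|)%:R.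
  rewrite /A; case: ifP => [/orP[] /eqP -> // | _].
  by rewrite ler_piMl // ltW // (lt_trans eps_lt) // invf_lt1 // ltr1n.
have A_in_X l v : (l == i) || (l == k) -> v \in A l -> v \in X j.
  by rewrite /A => ->; rewrite inE => /andP[].
suff A0 : @density R V E (A 0) (A 1) (A 2) = 0.
  have := D_regular (A_sub 0) (A_sub 1) (A_sub 2) (A_big 0) (A_big 1) (A_big 2).
  rewrite A0 subr0 ger0_norm; first by rewrite leNgt D_dense.
  exact: ltW (lt_trans eps_gt0 D_dense).
apply: density_eq0 => x y z x0 y1 z2; apply/negP => e_in.
have t_in l : tnth [tuple x; y; z] l \in A l.
  case: l => [[|[|[|]]] l_lt] //; [move: x0 | move: y1 | move: z2];
  by congr (_ \in A _); apply: val_inj.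
have t_X l : (l == i) || (l == k) -> tnth [tuple x; y; z] l \in X j.
  by move/A_in_X; apply; apply: t_in.
by move/eqP: ik; apply; apply: (edge_class_tnth_inj e_in (t_X i _) (t_X k _));
  rewrite eqxx ?orbT.
Qed.

Lemma exists_heavy i : exists j, heavy i j.
Proof.
have [j hj | light] := pickP (heavy i); first by exists j.
have [cover disj _] := EX.
have Di_gt0 : 0 < (#|D i|)%:R :> R by rewrite ltr0n card_gt0.
have : (#|D i|)%:R < \sum_(j < 3) eps * (#|D i|)%:R :> R.
  rewrite {1}(card_sum_partition (D i) cover disj) natr_sum.
  apply: ltr_sum => [|j _]; first by apply/hasP; exists ord0.
  by rewrite ltNge (negbT (light j)).
rewrite sumr_const card_ord -mulr_natl => too_big.
have eps3 : 3%:R * eps < 1 by rewrite mulrC -ltr_pdivlMr ?ltr0n // mul1r.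
exfalso; nra.
Qed.

Definition heavy_class i := odflt ord0 [pick j | heavy i j].

Lemma heavy_classP i : heavy i (heavy_class i).
Proof.
rewrite /heavy_class; case: pickP => [j // | light].
by have [j] := exists_heavy i; rewrite light.
Qed.

Lemma heavy_class_inj : injective heavy_class.
Proof.
by move=> i k eq_ik; apply: (heavy_inj (heavy_classP i)); rewrite eq_ik heavy_classP.
Qed.

Lemma heavy_class_large i :
  (1 - 2 * eps) * (#|D i|)%:R <= (#|D i :&: X (heavy_class i)|)%:R.
Proof.
have [cover disj _] := EX.
have [g _ gK] := injF_bij heavy_class_inj.
have light j : j != heavy_class i -> (#|D i :&: X j|)%:R <= eps * (#|D i|)%:R.
  move=> jf; apply/ltW; rewrite ltNge; apply: contra jf => hij.
  have hgj : heavy (g j) j by rewrite -{2}(gK j) heavy_classP.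
  by rewrite -(gK j) -(heavy_inj hij hgj).
have split_Di : (#|D i|)%:R = (#|D i :&: X (heavy_class i)|)%:R
                  + \sum_(j | j != heavy_class i) (#|D i :&: X j|)%:R :> R.
  rewrite {1}(card_sum_partition (D i) cover disj) (bigD1 (heavy_class i)) //=.
  by rewrite natrD natr_sum.
have rest : \sum_(j | j != heavy_class i) (#|D i :&: X j|)%:R
            <= 2%:R * (eps * (#|D i|)%:R) :> R.
  by apply: le_trans (ler_sum _ light) _; rewrite sumr_const cardC1 card_ord mulr_natl.
lra.
Qed.

End DenseRegularTriple.

End ThreePartite.

Theorem lemma5p2 (R : realFieldType) (V : finType) (E : {set {set V}})
  (X : 'I_3 -> {set V}) (D : 'I_3 -> {set V}) (eps : R) :
  0 < eps -> eps < 3^-1 ->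
  is_3graph E -> is_3partite E X ->
  (forall i, D i != set0) ->
  @eps_regular R V E eps (D 0) (D 1) (D 2) ->
  @density R V E (D 0) (D 1) (D 2) <= eps \/
  exists f : 'I_3 -> 'I_3, injective f /\
    forall i, (1 - 2 * eps) * (#|D i|)%:R <= (#|D i :&: X (f i)|)%:R.
Proof.
move=> eps_gt0 eps_lt E3 EX D_neq0 D_regular.
have [|dense] := lerP (@density R V E (D 0) (D 1) (D 2)) eps; [by left | right].
exists (heavy_class X D eps); split.
- exact: (heavy_class_inj E3 EX eps_gt0 eps_lt D_neq0 D_regular dense).
- exact: (heavy_class_large E3 EX eps_gt0 eps_lt D_neq0 D_regular dense).
Qed.
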